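(* Let $d\in\mathbb{N}$ with $d\ge 2$ and let $\omega\ge 1/d$. Then \[\left\{\boldsymbol{\alpha}\in K_d:\lim_{Q\to\infty}Q^\omega\min_{0<q\le Q}\|q\boldsymbol{\alpha}\|=0\right\}\subseteq E(d-1+d\omega).\]
   Context: For $\boldsymbol{x}\in\mathbb{R}^d$, $|\boldsymbol{x}|=\max_i|x_i|$ and $\|\boldsymbol{x}\|=\min_{\boldsymbol{p}\in\mathbb{Z}^d}|\boldsymbol{x}-\boldsymbol{p}|$; for $x\in\mathbb{R}$, $\|x\|$ is the distance to the nearest integer. $q$ ranges over integers. $K_d$ is the set of $\boldsymbol{\alpha}\in\mathbb{R}^d$ with $1,\alpha_1,\dots,\alpha_d$ linearly independent over $\mathbb{Q}$. For $\boldsymbol{r},\boldsymbol{\alpha}\in\mathbb{R}^d$, $\boldsymbol{r}\boldsymbol{\alpha}$ is the standard inner product. For real $\omega'\ge d$, \[E(\omega')=\left\{\boldsymbol{\alpha}\in K_d:\lim_{R\to\infty}R^{\omega'}\min\{\|\boldsymbol{r}\boldsymbol{\alpha}\|:\boldsymbol{r}\in\mathbb{Z}^d,\ 0<|\boldsymbol{r}|\le R\}=0\right\}.\] *)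

From HB Require Import structures.
From mathcomp Require Import all_boot all_order all_algebra.
From mathcomp Require Import all_classical all_reals all_analysis.
Set Implicit Arguments. Unset Strict Implicit. Unset Printing Implicit Defensive.
Import Order.TTheory GRing.Theory Num.Theory.
Import numFieldNormedType.Exports.
Local Open Scope classical_set_scope.
Local Open Scope ring_scope.

Section Defs.
Variable R : realType.

Definition distZ (x : R) : R := inf [set `|x - p%:~R| | p in [set: int]].

Definition supn (d : nat) (x : 'I_d -> R) : R := \big[Num.max/0]_(i < d) `|x i|.

Definition distZv (d : nat) (x : 'I_d -> R) : R :=
  inf [set supn (fun i => x i - (p i)%:~R) | p in [set: 'I_d -> int]].

Definition Kd (d : nat) : set ('I_d -> R) :=
  [set a | forall (c0 : rat) (c : 'I_d -> rat),
      ratr c0 + \sum_(i < d) ratr (c i) * a i = 0 -> c0 = 0 /\ forall i, c i = 0].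

Definition simmin (d : nat) (a : 'I_d -> R) (Q : R) : R :=
  inf [set distZv (fun i => q%:~R * a i) | q in [set q : int | 0 < q /\ q%:~R <= Q]].

Definition linmin (d : nat) (a : 'I_d -> R) (Rr : R) : R :=
  inf [set distZ (\sum_(i < d) (r i)%:~R * a i) |
        r in [set r : 'I_d -> int |
               0 < supn (fun i => (r i)%:~R) /\ supn (fun i => (r i)%:~R) <= Rr]].

Definition Eset (d : nat) (w' : R) : set ('I_d -> R) :=
  [set a | @Kd d a /\ (Rr `^ w' * @linmin d a Rr) @[Rr --> +oo] --> (0 : R)].

End Defs.

(* If ||q alpha|| < delta for some 0 < q <= N^d, write q alpha = p + e with |e_i| < delta.
   Sort the (2N+1)^d vectors t in [0, 2N]^d by the residue of t.p modulo q and by which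
   of K+1 intervals of length 4dN delta / K contains t.e + 2dN delta, where K = N^d / q.
   Since q (K+1) < (2N+1)^d, two vectors t, t' share a class; r = t - t' is then nonzero,
   |r| <= 2N, r.p = mq for an integer m, and q |r.alpha - m| = |r.e| < 4dN delta / K, so
   ||r alpha|| <= 8dN delta / N^d.  Taking N = floor(R/2) and Q = N^d, this bounds
   R^(d-1+dw) min_{0<|r|<=R} ||r alpha|| by 4^(d-1+dw) 8d Q^w min_{0<q<=Q} ||q alpha||,
   which tends to 0. *)
From HB Require Import structures.
From mathcomp Require Import all_boot all_order all_algebra.
From mathcomp Require Import all_classical all_reals all_analysis.
From mathcomp Require Import zify ring lra.
Set Implicit Arguments. Unset Strict Implicit. Unset Printing Implicit Defensive.
Import Order.TTheory GRing.Theory Num.Theory.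
Import numFieldNormedType.Exports.
Local Open Scope classical_set_scope.
Local Open Scope ring_scope.

Lemma leq_2_muln_divn (n q : nat) : (0 < q)%N -> (q <= n)%N -> (n <= 2 * (q * (n %/ q)))%N.
Proof.
move=> q_gt0 qn; have := divn_eq n q; have := ltn_pmod n q_gt0.
have : (q <= q * (n %/ q))%N by rewrite leq_pmulr // divn_gt0.
lia.
Qed.

Lemma muln_divnS_lt_exp (d N q : nat) : (0 < d)%N -> (q <= N ^ d)%N ->
  (q * (N ^ d %/ q).+1 < (2 * N).+1 ^ d)%N.
Proof.
move=> d_gt0 qN.
have qK : (q * (N ^ d %/ q) <= N ^ d)%N by rewrite mulnC leq_divM.
have : (2 * N ^ d <= (2 * N) ^ d)%N.
  by rewrite expnMn leq_mul2r -{1}(expn1 2) leq_exp2l // d_gt0 orbT.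
have : ((2 * N) ^ d < (2 * N).+1 ^ d)%N by rewrite ltn_exp2r.
rewrite mulnS; lia.
Qed.

Lemma pigeonhole_residue_box (R : realType) (T : finType) (n K : nat) (g : T -> int)
    (h : T -> R) (W : R) :
  0 < W -> (forall t, 0 <= g t < n%:Z) -> (forall t, 0 <= h t < K.+1%:R * W) ->
  (n * K.+1 < #|T|)%N ->
  exists t1 t2, [/\ t1 != t2, g t1 = g t2 & `|h t1 - h t2| < W].
Proof.
move=> W_gt0 g_bnd h_bnd cardT.
pose box t := Num.floor (h t / W).
have box_bnd t : 0 <= box t < K.+1%:Z.
  have /andP[h_ge0 h_lt] := h_bnd t.
  by rewrite floor_ge0 floor_lt_int divr_ge0 ?(ltW W_gt0) //= ltr_pdivrMr.
have absz_lt (z : int) m : 0 <= z < m%:Z -> (absz z < m)%N by move=> ?; lia.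
pose f t := (Ordinal (absz_lt _ _ (g_bnd t)), Ordinal (absz_lt _ _ (box_bnd t))).
have /injectivePn[t1 [t2 t12 [= g12 box12]]] : ~~ injectiveb f.
  apply/negP => /injectiveP/leq_card; rewrite card_prod !card_ord; lia.
exists t1, t2; split => //.
  by have := g_bnd t1; have := g_bnd t2; move: g12; lia.
have := floor_itv (h t1 / W); have := floor_itv (h t2 / W).
rewrite -/(box t1) -/(box t2) (_ : box t1 = box t2); last first.
  by have := box_bnd t1; have := box_bnd t2; move: box12; lia.
rewrite intrD => /andP[lo2 up2] /andP[lo1 up1].
have : `|h t1 / W - h t2 / W| < 1 by rewrite ltr_norml; apply/andP; split; lra.
by rewrite -mulrBl normrM normfV (gtr0_norm W_gt0) ltr_pdivrMr // mul1r.
Qed.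

Section Infima.
Variables (R : realType) (d : nat).
Implicit Types (x a : 'I_d -> R).

Lemma ler_norm_supn x i : `|x i| <= supn x.
Proof. exact: le_bigmax. Qed.

Lemma supn_le x (c : R) : 0 <= c -> (forall i, `|x i| <= c) -> supn x <= c.
Proof. by move=> c_ge0 xc; apply: bigmax_le. Qed.

Lemma distZ_ge0 (y : R) : 0 <= distZ y.
Proof. by apply: lb_le_inf; [exists `|y - 0%:~R|, 0 | move=> _ [p _ <-]]. Qed.

Lemma distZ_le (y : R) (m : int) : distZ y <= `|y - m%:~R|.
Proof. by apply: ge_inf; [exists 0 => _ [p _ <-] | exists m]. Qed.

Lemma distZv_lt_exists x (c : R) : distZv x < c ->
  exists p : 'I_d -> int, forall i, `|x i - (p i)%:~R| < c.
Proof.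
case/inf_lt => [|_ [p _ <-] xp]; first by exists (supn (fun i => x i - 0%:~R)), (fun=> 0).
by exists p => i; apply: le_lt_trans xp; apply: (ler_norm_supn (fun i => x i - _)).
Qed.

Lemma simmin_lt_exists a (Q c : R) : 1 <= Q -> simmin a Q < c ->
  exists2 q : int, 0 < q /\ q%:~R <= Q & distZv (fun i => q%:~R * a i) < c.
Proof.
move=> Q_ge1; case/inf_lt => [|_ [q qQ <-]]; last by exists q.
by exists (distZv (fun i => 1%:~R * a i)), 1.
Qed.

Lemma linmin_le_distZ a (Rr : R) (r : 'I_d -> int) :
  0 < supn (fun i => (r i)%:~R : R) -> supn (fun i => (r i)%:~R : R) <= Rr ->
  linmin a Rr <= distZ (\sum_i (r i)%:~R * a i).
Proof.
move=> r_gt0 rR; apply: ge_inf; last by exists r.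
by exists 0 => _ [r' _ <-]; apply: distZ_ge0.
Qed.

Lemma linmin_ge0 a (Rr : R) : (0 < d)%N -> 1 <= Rr -> 0 <= linmin a Rr.
Proof.
move=> d_gt0 Rr_ge1; apply: lb_le_inf => [|_ [r _ <-]]; last exact: distZ_ge0.
exists (distZ (\sum_i (1%:Z)%:~R * a i)), (fun=> 1%:Z); split => //.
  by apply: lt_le_trans (ler_norm_supn _ (Ordinal d_gt0)); rewrite normr1.
by apply: supn_le => [|i]; [exact: le_trans Rr_ge1 | rewrite normr1].
Qed.

End Infima.

Section Transference.
Variables (R : realType) (d : nat).
Implicit Types (a e : 'I_d -> R) (p r : 'I_d -> int).

Lemma norm_sum_mul_le (x : 'I_d -> R) e (B c : R) :
  (forall i, `|x i| <= B) -> (forall i, `|e i| <= c) ->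
  `|\sum_i x i * e i| <= d%:R * B * c.
Proof.
move=> xB ec; apply: le_trans (ler_norm_sum _ _ _) _.
apply: le_trans (_ : \sum_(i < d) B * c <= _).
  by apply: ler_sum => i _; rewrite normrM ler_pM.
by rewrite sumr_const card_ord -mulrA mulr_natl.
Qed.

Lemma dvdz_linear_form a (q : nat) p r : (q%:Z %| \sum_i r i * p i)%Z ->
  exists m : int, q%:R * (\sum_i (r i)%:~R * a i - m%:~R)
                  = \sum_i (r i)%:~R * (q%:R * a i - (p i)%:~R).
Proof.
move=> /dvdzP[m rp]; exists m; rewrite mulrBr.
have -> : q%:R * m%:~R = \sum_i (r i)%:~R * (p i)%:~R :> R.
  rewrite mulrC -[q%:R]/(q%:Z%:~R) -intrM -rp rmorph_sum.
  by apply: eq_bigr => i _; rewrite rmorphM.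
by rewrite mulr_sumr -sumrB; apply: eq_bigr => i _; ring.
Qed.

Lemma exists_dvdz_small_form e p (N q K : nat) (delta : R) :
  0 < delta -> (0 < q)%N -> (0 < K)%N -> (q * K.+1 < (2 * N).+1 ^ d)%N ->
  (forall i, `|e i| <= delta) ->
  exists r, [/\ exists i, r i != 0, forall i, `|r i| <= (2 * N)%:Z,
    (q%:Z %| \sum_i r i * p i)%Z &
    K%:R * `|\sum_i (r i)%:~R * e i| < 4 * d%:R * N%:R * delta].
Proof.
move=> delta_gt0 q_gt0 K_gt0 card_gt e_bnd.
pose W := 4 * d%:R * N%:R * delta / K%:R.
have KW : K%:R * W = 4 * d%:R * N%:R * delta.
  by rewrite /W mulrC divfK // pnatr_eq0 -lt0n.
have d_gt0 : (0 < d)%N by move: card_gt; case: (d) => //; rewrite expn0; lia.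
have N_gt0 : (0 < N)%N by move: card_gt; case: (N) => //; rewrite muln0 exp1n; lia.
have W_gt0 : 0 < W by rewrite divr_gt0 ?ltr0n // !mulr_gt0 ?ltr0n.
pose T := {ffun 'I_d -> 'I_(2 * N).+1}.
pose x (t : T) i : int := (t i : nat)%:Z.
have x_bnd t i : `|x t i| <= (2 * N)%:Z by have := ltn_ord (t i); rewrite /x; lia.
pose h (t : T) := \sum_i (x t i)%:~R * e i + 2 * d%:R * N%:R * delta.
have h_bnd t : 0 <= h t < K.+1%:R * W.
  have : `|\sum_i (x t i)%:~R * e i| <= d%:R * (2 * N)%:R * delta.
    apply: norm_sum_mul_le => // i.
    by rewrite -intr_norm -[(2 * N)%:R]/((2 * N)%:Z%:~R) ler_int.
  rewrite ler_norml natrM => /andP[lo hi].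
  rewrite -addn1 natrD mulrDl mul1r KW /h; apply/andP; split; lra.
pose res (t : T) := ((\sum_i x t i * p i) %% q%:Z)%Z.
have res_bnd t : 0 <= res t < q%:Z by rewrite modz_ge0 ?ltz_pmod //=; lia.
have [t1 [t2 [t12 res12 h12]]] : exists t1 t2, [/\ t1 != t2, res t1 = res t2 &
    `|h t1 - h t2| < W].
  by apply: pigeonhole_residue_box; rewrite // card_ffun !card_ord.
exists (fun i => x t1 i - x t2 i); split.
- have /existsP[i t12i] : [exists i, t1 i != t2 i].
    apply: contraR t12 => /existsPn eq12.
    by apply/eqP/ffunP => i; apply/eqP/negPn/eq12.
  by exists i; rewrite subr_eq0 eqz_nat.
- by move=> i; have := x_bnd t1 i; have := x_bnd t2 i; rewrite /x; lia.
- move/eqP: res12; rewrite eqz_mod_dvd.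
  by rewrite -sumrB (eq_bigr _ (fun i _ => esym (mulrBl _ _ _))).
suff -> : \sum_i (x t1 i - x t2 i)%:~R * e i = h t1 - h t2 by rewrite -KW ltr_pM2l ?ltr0n.
rewrite /h opprD addrACA subrr addr0 -sumrB.
by apply: eq_bigr => i _; rewrite intrB mulrBl.
Qed.

Lemma exists_small_linear_form a (N q : nat) p (delta : R) :
  (0 < d)%N -> (0 < q)%N -> (q <= N ^ d)%N ->
  (forall i, `|q%:R * a i - (p i)%:~R| < delta) ->
  exists r, [/\ exists i, r i != 0, forall i, `|r i| <= (2 * N)%:Z &
    exists m : int,
      `|\sum_i (r i)%:~R * a i - m%:~R| * (N ^ d)%:R <= 8 * d%:R * N%:R * delta].
Proof.
move=> d_gt0 q_gt0 qN close.
have delta_gt0 : 0 < delta := le_lt_trans (normr_ge0 _) (close (Ordinal d_gt0)).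
pose K := (N ^ d %/ q)%N.
have K_gt0 : (0 < K)%N by rewrite divn_gt0.
have [r [r_neq0 r_bnd r_dvd small]] :=
  exists_dvdz_small_form p delta_gt0 q_gt0 K_gt0 (muln_divnS_lt_exp d_gt0 qN)
    (fun i => ltW (close i)).
have [m qm] := dvdz_linear_form a r_dvd.
exists r; split => //; exists m.
set X := `|_ - _|.
apply: (@le_trans _ _ (X * (2 * (q * K))%:R)).
  by apply: ler_wpM2l; [exact: normr_ge0 | rewrite ler_nat leq_2_muln_divn].
have -> : X * (2 * (q * K))%:R
          = 2 * (K%:R * `|\sum_i (r i)%:~R * (q%:R * a i - (p i)%:~R)|).
  by rewrite /X -qm normrM normr_nat !natrM; ring.
have -> : 8 * d%:R * N%:R * delta = 2 * (4 * d%:R * N%:R * delta) by ring.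
by rewrite ler_pM2l // ltW.
Qed.

Lemma linmin_le_simmin a (N : nat) (Rr : R) :
  (0 < d)%N -> (0 < N)%N -> (2 * N)%:R <= Rr ->
  linmin a Rr * (N ^ d)%:R <= 8 * d%:R * N%:R * simmin a (N ^ d)%:R.
Proof.
move=> d_gt0 N_gt0 NR.
have c_gt0 : 0 < 8 * d%:R * N%:R :> R by rewrite !mulr_gt0 ?ltr0n.
rewrite -ler_pdivrMl //; apply/ler_addgt0Pr => e e_gt0.
have /simmin_lt_exists[] : simmin a (N ^ d)%:R < simmin a (N ^ d)%:R + e.
- by rewrite ltrDl.
- by rewrite ler1n expn_gt0 N_gt0.
move=> q [q_gt0 qN] /distZv_lt_exists[p close].
have [qn q_def] : exists qn : nat, q = qn by exists `|q|%N; lia.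
rewrite q_def ler_nat in qN; rewrite {}q_def in q_gt0 close.
have [r [[i r_neq0] r_bnd [m rm]]] := exists_small_linear_form d_gt0 q_gt0 qN close.
have r_gt0 : 0 < supn (fun j => (r j)%:~R : R).
  by apply: lt_le_trans (ler_norm_supn _ i); rewrite normr_gt0 intr_eq0.
have r_le : supn (fun j => (r j)%:~R : R) <= Rr.
  apply: supn_le => [|j]; first by apply: le_trans NR.
  by rewrite -intr_norm (le_trans _ NR) // -[(2 * N)%:R]/((2 * N)%:Z%:~R) ler_int.
rewrite ler_pdivrMl //; apply: le_trans rm; apply: ler_wpM2r => //.
exact: le_trans (linmin_le_distZ a r_gt0 r_le) (distZ_le _ m).
Qed.

Lemma powR_linmin_le_simmin a (w : R) (N : nat) (Rr : R) :
  (0 < d)%N -> (0 < N)%N -> (2 * N)%:R <= Rr <= (4 * N)%:R ->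
  0 <= d%:R - 1 + d%:R * w ->
  Rr `^ (d%:R - 1 + d%:R * w) * linmin a Rr <=
    4 `^ (d%:R - 1 + d%:R * w) * (8 * d%:R) * ((N ^ d)%:R `^ w * simmin a (N ^ d)%:R).
Proof.
move=> d_gt0 N_gt0 /andP[NR RN]; set w' := _ - 1 + _ => w'_ge0.
have N_gt0' : 0 < N%:R :> R by rewrite ltr0n.
have Rr_ge1 : 1 <= Rr by apply: le_trans NR; rewrite ler1n; lia.
have lin_ge0 := linmin_ge0 a d_gt0 Rr_ge1.
have NwN : N%:R `^ w' * N%:R = (N ^ d)%:R * (N ^ d)%:R `^ w.
  rewrite -{2}(powRr1 (ltW N_gt0')) -powRD ?(gt_eqF N_gt0') ?implybT //.
  rewrite natrX -powR_mulrn ?ler0n // -powRrM -powRD ?(gt_eqF N_gt0') ?implybT //.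
  by congr (_ `^ _); rewrite /w'; ring.
apply: (@le_trans _ _ ((4 * N%:R) `^ w' * linmin a Rr)).
  apply: ler_wpM2r => //; apply: ge0_ler_powR; rewrite ?nnegrE -?natrM //.
  exact: le_trans Rr_ge1.
rewrite powRM ?ler0n // -!mulrA ler_pM2l ?powR_gt0 // -(ler_pM2r N_gt0') mulrAC NwN.
have -> : (N ^ d)%:R * (N ^ d)%:R `^ w * linmin a Rr
          = (N ^ d)%:R `^ w * (linmin a Rr * (N ^ d)%:R) by ring.
have -> : 8 * (d%:R * ((N ^ d)%:R `^ w * simmin a (N ^ d)%:R)) * N%:R
          = (N ^ d)%:R `^ w * (8 * d%:R * N%:R * simmin a (N ^ d)%:R) by ring.
by apply: ler_wpM2l; [exact: powR_ge0 | exact: linmin_le_simmin].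
Qed.

End Transference.

Lemma floor_half_itv (R : realType) (x : R) : 0 <= x ->
  (2 * `|Num.floor (x / 2)|%N)%:R <= x < (2 * `|Num.floor (x / 2)|%N + 2)%:R.
Proof.
move=> x_ge0; have f_ge0 : 0 <= Num.floor (x / 2) by rewrite floor_ge0 divr_ge0.
have /andP[lo hi] := floor_itv (x / 2).
rewrite intrD in hi; rewrite natrD natrM natr_absz ger0_norm //.
by apply/andP; split; lra.
Qed.

Lemma floor_half_expn_cvgy (R : realType) (d : nat) : (0 < d)%N ->
  ((`|Num.floor (x / 2 : R)|%N ^ d)%:R : R) @[x --> +oo] --> +oo.
Proof.
move=> d_gt0; apply/cvgryPge => A; near=> x.
have x_ge : 2 * `|A| + 2 <= x by near: x; apply: nbhs_pinfty_ge; rewrite num_real.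
have /andP[_] : (2 * `|Num.floor (x / 2)|%N)%:R <= x < (2 * `|Num.floor (x / 2)|%N + 2)%:R.
  by apply: floor_half_itv; have := normr_ge0 A; lra.
set N := `|_|%N; rewrite natrD natrM => x_lt.
have NA : `|A| < N%:R by lra.
rewrite natrX; apply: le_trans (ler_norm A) (le_trans (ltW NA) (ler_eXnr _ _)) => //.
by rewrite ler1n -(ltr0n R); apply: le_lt_trans NA.
Unshelve. all: end_near.
Qed.

Theorem lemma3 (R : realType) (d : nat) (w : R) :
  (2 <= d)%N -> 1 / d%:R <= w ->
  [set a : 'I_d -> R | @Kd R d a /\ (Q `^ w * @simmin R d a Q) @[Q --> +oo] --> (0 : R)]
    `<=` @Eset R d (d%:R - 1 + d%:R * w).
Proof.
move=> d_ge2 w_ge a [Ka simmin_cvg]; split => //.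
have d_gt0 : (0 < d)%N by apply: leq_trans d_ge2.
have w'_ge0 : 0 <= d%:R - 1 + d%:R * w.
  have d_ge2' : 2 <= d%:R :> R by rewrite ler_nat.
  by move: w_ge; rewrite ler_pdivrMr ?ltr0n //; lra.
pose N (x : R) := `|Num.floor (x / 2)|%N.
have Nd_cvg : ((N x ^ d)%:R : R) @[x --> +oo] --> +oo := floor_half_expn_cvgy d_gt0.
pose C := 4 `^ (d%:R - 1 + d%:R * w) * (8 * d%:R).
have upper_cvg :
    C * ((N x ^ d)%:R `^ w * simmin a (N x ^ d)%:R) @[x --> +oo] --> (0 : R).
  by rewrite -(mulr0 C); apply: cvgMl_tmp; exact: (cvg_comp _ _ Nd_cvg simmin_cvg).
apply: (squeeze_cvgr _ (cvg_cst 0) upper_cvg); near=> x.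
have x_ge : 4 <= x by near: x; apply: nbhs_pinfty_ge; rewrite num_real.
have /andP[x_lo] : (2 * N x)%:R <= x < (2 * N x + 2)%:R by apply: floor_half_itv; lra.
rewrite natrD natrM => x_hi.
have N_gt0 : (0 < N x)%N by rewrite -(ltr0n R); lra.
apply/andP; split; first by rewrite mulr_ge0 ?powR_ge0 ?linmin_ge0 //; lra.
by apply: powR_linmin_le_simmin => //; rewrite x_lo /= natrM; lra.
Unshelve. all: end_near.
Qed.
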